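(* For $\varepsilon\in[0,1]$ let $\Phi_{\mathrm{feas}}(\varepsilon)=\{(\pi_1,\dots,\pi_N,\pi_c)\in\Pi^{N+1}:\|\pi_i-\pi_c\|_\infty\le\varepsilon\ \text{for all } i\}$ and $$S^{\mathrm{CAL}}(\varepsilon)=\arg\min_{(\pi_1,\dots,\pi_N,\pi_c)\in\Phi_{\mathrm{feas}}(\varepsilon)}\sum_{i=1}^N\|\Phi^\top\mu^{\pi_i}_i-\Phi^\top\mu^{\pi^{E_i}}_i\|_1 .$$ Then the set-valued map $S^{\mathrm{CAL}}:[0,1]\rightrightarrows\Pi^{N+1}$ is upper semicontinuous at $\varepsilon=0$.
   Context: Let $\mathcal{S},\mathcal{A}$ be finite sets, $\gamma\in(0,1)$, $\rho$ a probability distribution on $\mathcal{S}$, and for $i=1,\dots,N$ environment $i$ is the Markov decision process $(\mathcal{S},\mathcal{A},P^i,\gamma,\rho)$. $\Pi$ is the set of stationary policies $\pi:\mathcal{S}\to\Delta(\mathcal{A})$, identified with vectors $(\pi(s,a))_{(s,a)}\in\mathbb{R}^{|\mathcal{S}||\mathcal{A}|}$, and $\|\pi-\pi'\|_\infty=\max_{(s,a)}|\pi(s,a)-\pi'(s,a)|$. $\mu^\pi_i(s,a)=\sum_{t\ge0}\gamma^t\mathbb{P}^{\pi,i}_\rho[s_t=s,a_t=a]$ is the discounted occupation measure (trajectory law: $s_0\sim\rho$, $a_t\sim\pi(s_t,\cdot)$, $s_{t+1}\sim P^i(\cdot\mid s_t,a_t)$). Expert policies $\pi^{E_i}\in\Pi$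 and a cost basis matrix $\Phi\in\mathbb{R}^{|\mathcal{S}||\mathcal{A}|\times n_c}$ with columns of sup-norm at most $1$ are given. A set-valued map $F:X\rightrightarrows Y$ is upper semicontinuous at $x_0$ if for every neighborhood $U$ of the set $F(x_0)$ there is a neighborhood $W$ of $x_0$ with $F(x)\subset U$ for all $x\in W$. *)

From HB Require Import structures.
From mathcomp Require Import all_boot all_order all_algebra.
From mathcomp Require Import all_classical all_reals all_analysis.
Set Implicit Arguments. Unset Strict Implicit. Unset Printing Implicit Defensive.
Import Order.TTheory GRing.Theory Num.Theory.
Local Open Scope ring_scope.
Local Open Scope classical_set_scope.

Section Defs.
Context {R : realType} {S A : finType}.

(* a stationary policy, identified with the vector (pi(s,a))_{(s,a)} *)
Definition policy := S -> A -> R.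

Definition is_policy (pi : policy) : Prop :=
  (forall s a, 0 <= pi s a) /\ (forall s, \sum_(a : A) pi s a = 1).

Definition is_distr (rho : S -> R) : Prop :=
  (forall s, 0 <= rho s) /\ \sum_(s : S) rho s = 1.

(* transition kernel: P s a s' = P(s' | s, a) *)
Definition is_kernel (P : S -> A -> S -> R) : Prop :=
  forall s a, is_distr (P s a).

Definition supdist (pi pi' : policy) : R :=
  \big[Num.max/0]_(s : S) \big[Num.max/0]_(a : A) `|pi s a - pi' s a|.

(* law of s_t under the trajectory law: s_0 ~ rho, a_t ~ pi(s_t,.),
   s_{t+1} ~ P(. | s_t, a_t) *)
Fixpoint state_law (rho : S -> R) (P : S -> A -> S -> R) (pi : policy)
  (t : nat) : S -> R :=
  match t with
  | 0%N => rho
  | t'.+1 => fun s' => \sum_(s : S) \sum_(a : A)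
                 state_law rho P pi t' s * pi s a * P s a s'
  end.

Definition sa_law rho P pi t (s : S) (a : A) : R := state_law rho P pi t s * pi s a.

Definition occ (gamma : R) rho P pi (s : S) (a : A) : R :=
  limn (fun n => \sum_(0 <= t < n) gamma ^+ t * sa_law rho P pi t s a).

(* || Phi^T mu - Phi^T mu' ||_1, Phi : |S||A| x nc, Phi s a k = Phi_{(s,a),k} *)
Definition feat_l1 (nc : nat) (Phi : S -> A -> 'I_nc -> R) (mu mu' : S -> A -> R) : R :=
  \sum_(k < nc) `| \sum_(s : S) \sum_(a : A) Phi s a k * mu s a
                 - \sum_(s : S) \sum_(a : A) Phi s a k * mu' s a |.

(* elements of Pi^{N+1}: ((pi_1,...,pi_N), pi_c) *)
Definition joint (N : nat) := (('I_N -> policy) * policy)%type.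

Definition feas (N : nat) (eps : R) (x : joint N) : Prop :=
  (forall i, is_policy (x.1 i)) /\ is_policy x.2 /\
  (forall i, supdist (x.1 i) x.2 <= eps).

Definition cal_obj (N nc : nat) (gamma : R) (rho : S -> R)
  (P : 'I_N -> S -> A -> S -> R) (piE : 'I_N -> policy)
  (Phi : S -> A -> 'I_nc -> R) (x : joint N) : R :=
  \sum_(i < N) feat_l1 Phi (occ gamma rho (P i) (x.1 i))
                           (occ gamma rho (P i) (piE i)).

Definition S_CAL (N nc : nat) (gamma : R) rho (P : 'I_N -> S -> A -> S -> R) piE (Phi : S -> A -> 'I_nc -> R) (eps : R) : set (joint N) :=
  [set x | feas eps x /\
     forall y, feas eps y -> cal_obj gamma rho P piE Phi x <= cal_obj gamma rho P piE Phi y].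

Definition jdist (N : nat) (x y : joint N) : R :=
  Num.max (\big[Num.max/0]_(i < N) supdist (x.1 i) (y.1 i)) (supdist x.2 y.2).

Definition jopen (N : nat) (V : set (joint N)) : Prop :=
  forall x, V x -> exists2 r : R, 0 < r & forall y, jdist x y < r -> V y.

End Defs.

From HB Require Import structures.
From mathcomp Require Import all_boot all_order all_algebra.
From mathcomp Require Import all_classical all_reals all_analysis.
From mathcomp Require Import ring lra.
Set Implicit Arguments. Unset Strict Implicit.
Import Order.TTheory GRing.Theory Num.Theory.
Import numFieldNormedType.Exports.
Local Open Scope ring_scope.
Local Open Scope classical_set_scope.

(* The occupation measure, hence the CAL objective, is Lipschitz in the policies:
   the law of s_t moves by at most t |A| ||pi - pi'||_oo in l1, and
   sum_t gamma^t (t + 1) = (1 - gamma)^-2.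
   If upper semicontinuity failed at 0, there would be eps_n -> 0 and minimisers
   x_n in S^CAL(eps_n) outside the open set V. By compactness a subsequence of the
   consensus policies converges to some p, and feasibility forces every component
   of x_n to converge to p as well. The consensus (p, ..., p) is feasible for
   eps = 0 and optimal: any y feasible for 0 is feasible for eps_n, so the
   objective at x_n is at most that at y, and Lipschitz continuity carries this to
   the limit. Hence (p, ..., p) lies in S^CAL(0), a subset of V, and since V is
   open, so does x_n for large n. *)

Section occupation_measure.
Context {R : realType} {S A : finType}.
Implicit Types (pi : @policy R S A) (rho : S -> R) (P : S -> A -> S -> R).

Lemma policy_le1 pi s a : is_policy pi -> pi s a <= 1.
Proof.
move=> [pi_ge0 pi_sum1]; rewrite -(pi_sum1 s) (bigD1 a) //= lerDl.
by apply: sumr_ge0 => b _; apply: pi_ge0.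
Qed.

Section state_law.
Variables (rho : S -> R) (P : S -> A -> S -> R).
Hypotheses (rho_distr : is_distr rho) (P_kernel : is_kernel P).

Lemma state_law_ge0 pi : is_policy pi -> forall t s, 0 <= state_law rho P pi t s.
Proof.
case: rho_distr => rho_ge0 _ [pi_ge0 _]; elim=> [|t IH] s //=.
apply: sumr_ge0 => s0 _; apply: sumr_ge0 => a _.
by rewrite !mulr_ge0 //; case: (P_kernel s0 a) => ->.
Qed.

Lemma state_law_sum1 pi : is_policy pi -> forall t, \sum_s state_law rho P pi t s = 1.
Proof.
case: rho_distr => _ rho_sum1 [_ pi_sum1]; elim=> [|t IH] //=.
rewrite exchange_big /= -[RHS]IH; apply: eq_bigr => s _.
rewrite exchange_big /= -[RHS]mulr1 -(pi_sum1 s) mulr_sumr; apply: eq_bigr => a _.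
by rewrite -mulr_sumr; case: (P_kernel s a) => _ ->; rewrite mulr1.
Qed.

Lemma state_law_le1 pi : is_policy pi -> forall t s, state_law rho P pi t s <= 1.
Proof.
move=> pi_policy t s; rewrite -(state_law_sum1 pi_policy t) (bigD1 s) //= lerDl.
by apply: sumr_ge0 => b _; apply: state_law_ge0.
Qed.

Variables (pi pi' : @policy R S A) (d : R).
Hypotheses (pi_policy : is_policy pi) (pi'_policy : is_policy pi').
Hypothesis pi_close : forall s a, `|pi s a - pi' s a| <= d.

Lemma state_law_dist_le t :
  \sum_s `|state_law rho P pi t s - state_law rho P pi' t s| <= t%:R * #|A|%:R * d.
Proof.
elim: t => [|t IH] /=.
  by rewrite mul0r mul0r big1 // => s _; rewrite subrr normr0.
pose L := state_law rho P pi t; pose L' := state_law rho P pi' t.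
have step_le : \sum_s' `|\sum_s \sum_a L s * pi s a * P s a s'
                        - \sum_s \sum_a L' s * pi' s a * P s a s'|
    <= \sum_s \sum_a `|L s * pi s a - L' s * pi' s a|.
  apply: (@le_trans _ _ (\sum_s' \sum_s \sum_a `|L s * pi s a - L' s * pi' s a| * P s a s')).
    apply: ler_sum => s' _; rewrite -sumrB; apply: (le_trans (ler_norm_sum _ _ _)).
    apply: ler_sum => s _; rewrite -sumrB; apply: (le_trans (ler_norm_sum _ _ _)).
    apply: ler_sum => a _; rewrite -mulrBl normrM; apply: ler_wpM2l => //.
    by case: (P_kernel s a) => P_ge0 _; rewrite ger0_norm.
  rewrite exchange_big /=; apply: ler_sum => s _; rewrite exchange_big /=.
  by apply: ler_sum => a _; rewrite -mulr_sumr; case: (P_kernel s a) => _ ->; rewrite mulr1.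
have term_le s a : `|L s * pi s a - L' s * pi' s a| <= `|L s - L' s| * pi s a + L' s * d.
  have -> : L s * pi s a - L' s * pi' s a
            = (L s - L' s) * pi s a + L' s * (pi s a - pi' s a) by ring.
  apply: (le_trans (ler_normD _ _)); apply: lerD.
    by rewrite normrM (ger0_norm (pi_policy.1 s a)).
  rewrite normrM ger0_norm; last exact: state_law_ge0.
  by apply: ler_wpM2l => //; apply: state_law_ge0.
apply: (le_trans step_le).
apply: (@le_trans _ _ (\sum_s (`|L s - L' s| + L' s * (#|A|%:R * d)))).
  apply: ler_sum => s _; apply: (le_trans (ler_sum _ (fun a _ => term_le s a))).
  rewrite big_split /= -mulr_sumr pi_policy.2 mulr1 lerD // -mulr_sumr.
  apply: ler_wpM2l; first exact: state_law_ge0.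
  by rewrite sumr_const mulr_natl.
rewrite big_split /= -mulr_suml (state_law_sum1 pi'_policy) mul1r.
have -> : t.+1%:R * #|A|%:R * d = t%:R * #|A|%:R * d + #|A|%:R * d by rewrite -natr1; ring.
by rewrite lerD2r.
Qed.

Lemma sa_law_dist_le t s a :
  `|sa_law rho P pi t s a - sa_law rho P pi' t s a| <= (t%:R * #|A|%:R + 1) * d.
Proof.
rewrite /sa_law; set L := state_law rho P pi t; set L' := state_law rho P pi' t.
have -> : L s * pi s a - L' s * pi' s a
          = (L s - L' s) * pi s a + L' s * (pi s a - pi' s a) by ring.
apply: (le_trans (ler_normD _ _)); rewrite [leRHS]mulrDl mul1r; apply: lerD.
  rewrite normrM (ger0_norm (pi_policy.1 s a)).
  apply: (@le_trans _ _ `|L s - L' s|).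
    by rewrite -[leRHS]mulr1; apply: ler_wpM2l => //; exact: policy_le1.
  apply: le_trans (state_law_dist_le t).
  by rewrite (bigD1 s) //= lerDl; apply: sumr_ge0.
rewrite normrM ger0_norm; last exact: state_law_ge0.
rewrite -[leRHS]mul1r; apply: ler_pM => //; first exact: state_law_ge0.
exact: state_law_le1.
Qed.

End state_law.

Lemma arith_geom_sumE (g : R) n :
  (\sum_(0 <= t < n) g ^+ t * t.+1%:R) * (1 - g) ^+ 2
  = 1 - n.+1%:R * g ^+ n + n%:R * g ^+ n.+1.
Proof.
elim: n => [|n IH]; first by rewrite big_geq // mul0r expr0 mul0r mulr1 subrr addr0.
by rewrite big_nat_recr //= mulrDl IH !exprS -!natr1; ring.
Qed.

Lemma arith_geom_sum_le (g : R) n : 0 <= g < 1 ->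
  \sum_(0 <= t < n) g ^+ t * t.+1%:R <= (1 - g) ^-2.
Proof.
move=> /andP[g_ge0 g_lt1]; have sqr_gt0 : 0 < (1 - g) ^+ 2 by rewrite exprn_gt0 // subr_gt0.
rewrite -[leRHS]mul1r ler_pdivlMr // arith_geom_sumE.
suff : n%:R * g ^+ n.+1 <= n.+1%:R * g ^+ n by lra.
have gn_ge0 : 0 <= g ^+ n by rewrite exprn_ge0.
have g1_ge0 : 0 <= 1 - g by rewrite subr_ge0 ltW.
have := mulr_ge0 (mulr_ge0 (ler0n R n) gn_ge0) g1_ge0.
rewrite exprS -natr1; nra.
Qed.

Definition occ_partial (gamma : R) rho P pi s a n :=
  \sum_(0 <= t < n) gamma ^+ t * sa_law rho P pi t s a.

Section occ_partial_sums.
Variables (gamma : R) (rho : S -> R) (P : S -> A -> S -> R).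
Hypotheses (gamma_bd : 0 <= gamma < 1) (rho_distr : is_distr rho) (P_kernel : is_kernel P).

Lemma is_cvg_occ_partial pi s a : is_policy pi -> cvgn (occ_partial gamma rho P pi s a).
Proof.
move=> pi_policy; have /andP[g_ge0 _] := gamma_bd.
have sa_law_ge0 t : 0 <= sa_law rho P pi t s a.
  by rewrite mulr_ge0 //; [exact: state_law_ge0 | exact: pi_policy.1].
apply: nondecreasing_is_cvgn.
  apply/nondecreasing_seqP => n; rewrite /occ_partial big_nat_recr //= lerDl.
  by rewrite mulr_ge0 ?exprn_ge0.
exists ((1 - gamma) ^-2) => _ [n _ <-]; apply: le_trans (arith_geom_sum_le n gamma_bd).
apply: ler_sum => t _; apply: ler_wpM2l; first by rewrite exprn_ge0.
apply: (@le_trans _ _ 1); last by rewrite ler1n.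
rewrite -[leRHS]mul1r; apply: ler_pM; rewrite ?pi_policy.1 ?state_law_ge0 //.
  exact: state_law_le1.
exact: policy_le1.
Qed.

Lemma occ_dist_le pi pi' d : is_policy pi -> is_policy pi' ->
  (forall s a, `|pi s a - pi' s a| <= d) ->
  forall s a, `|occ gamma rho P pi s a - occ gamma rho P pi' s a|
              <= (#|A|%:R + 1) * (1 - gamma) ^-2 * d.
Proof.
move=> pi_policy pi'_policy pi_close s a; have /andP[g_ge0 _] := gamma_bd.
have d_ge0 : 0 <= d by apply: le_trans (pi_close s a).
set C := (#|A|%:R + 1) * (1 - gamma) ^-2 * d.
have partial_close n :
    - C <= occ_partial gamma rho P pi s a n - occ_partial gamma rho P pi' s a n <= C.
  rewrite -ler_norml.
  rewrite /occ_partial -sumrB; apply: (le_trans (ler_norm_sum _ _ _)).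
  apply: (@le_trans _ _ (\sum_(0 <= t < n) gamma ^+ t * t.+1%:R * ((#|A|%:R + 1) * d))).
    apply: ler_sum => t _; rewrite -mulrBr normrM ger0_norm ?exprn_ge0 // -mulrA.
    apply: ler_wpM2l; first by rewrite exprn_ge0.
    apply: le_trans (sa_law_dist_le rho_distr P_kernel pi_policy pi'_policy pi_close t s a) _.
    rewrite mulrA; apply: ler_wpM2r => //.
    have := ler0n R t; have := ler0n R #|A|; rewrite -natr1; nra.
  rewrite -mulr_suml; apply: le_trans (ler_wpM2r _ (arith_geom_sum_le n gamma_bd)) _.
    by rewrite mulr_ge0 // addr_ge0.
  by rewrite /C mulrCA mulrA.
have cvg_diff : occ_partial gamma rho P pi s a n - occ_partial gamma rho P pi' s a n
    @[n --> \oo] --> occ gamma rho P pi s a - occ gamma rho P pi' s a.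
  by apply: cvgB; apply: (@is_cvg_occ_partial _ s a).
rewrite ler_norml; apply/andP; split.
  by apply: (cvgr_to_ge cvg_diff); apply: nearW => n; case/andP: (partial_close n).
by apply: (cvgr_to_le cvg_diff); apply: nearW => n; case/andP: (partial_close n).
Qed.

End occ_partial_sums.

Lemma feat_l1_lipschitz nc (Phi : S -> A -> 'I_nc -> R) (X Y E : S -> A -> R) c :
  (forall s a k, `|Phi s a k| <= 1) -> (forall s a, `|X s a - Y s a| <= c) ->
  feat_l1 Phi X E <= feat_l1 Phi Y E + (nc * #|S| * #|A|)%:R * c.
Proof.
move=> Phi_le1 XY_close.
have -> : (nc * #|S| * #|A|)%:R * c = \sum_(k < nc) \sum_(s : S) \sum_(a : A) c.
  rewrite !sumr_const card_ord -!mulrnA mulr_natl.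
  by congr (_ *+ _); rewrite (mulnC nc) mulnC.
rewrite /feat_l1 -big_split /=; apply: ler_sum => k _.
set fX := \sum_s \sum_a Phi s a k * X s a.
set fY := \sum_s \sum_a Phi s a k * Y s a.
set fE := \sum_s \sum_a Phi s a k * E s a.
have -> : fX - fE = (fY - fE) + (fX - fY) by ring.
apply: (le_trans (ler_normD _ _)); rewrite lerD2l.
rewrite /fX /fY -sumrB; apply: (le_trans (ler_norm_sum _ _ _)); apply: ler_sum => s _.
rewrite -sumrB; apply: (le_trans (ler_norm_sum _ _ _)); apply: ler_sum => a _.
by rewrite -mulrBr normrM -[leRHS]mul1r; apply: ler_pM.
Qed.

End occupation_measure.

Section policy_distance.
Context {R : realType} {S A : finType}.
Implicit Types (pi p : @policy R S A).

Lemma supdist_ge0 pi pi' : 0 <= supdist pi pi'.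
Proof.
rewrite /supdist; elim/big_ind: _ => // [x y x_ge0 _|s _]; first by rewrite le_max x_ge0.
by elim/big_ind: _ => // x y x_ge0 _; rewrite le_max x_ge0.
Qed.

Lemma ler_supdist pi pi' s a : `|pi s a - pi' s a| <= supdist pi pi'.
Proof. by apply: le_trans (le_bigmax _ _ s); exact: le_bigmax. Qed.

Lemma supdist_le r pi pi' : 0 <= r ->
  (forall s a, `|pi s a - pi' s a| <= r) -> supdist pi pi' <= r.
Proof.
move=> r_ge0 close; apply/bigmax_leP; split=> // s _.
by apply/bigmax_leP; split=> // a _; exact: close.
Qed.

Lemma supdist_lt r pi pi' : 0 < r ->
  (forall s a, `|pi s a - pi' s a| < r) -> supdist pi pi' < r.
Proof.
move=> r_gt0 close; apply/bigmax_ltP; split=> // s _.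
by apply/bigmax_ltP; split=> // a _; exact: close.
Qed.

Lemma supdist_cvg0 (f : nat -> policy) p :
  (forall s a, f n s a @[n --> \oo] --> p s a) -> supdist p (f n) @[n --> \oo] --> 0.
Proof.
move=> f_cvg; apply/cvgrPdist_lt => e e_gt0.
have f_close : \forall n \near \oo, forall sa : S * A, `|p sa.1 sa.2 - f n sa.1 sa.2| < e.
  by apply: filter_forall => -[s a]; exact: cvgr_dist_lt (f_cvg s a) _ e_gt0.
near=> n; rewrite sub0r normrN ger0_norm ?supdist_ge0 //.
have close_n : forall sa : S * A, `|p sa.1 sa.2 - f n sa.1 sa.2| < e by near: n.
by apply: supdist_lt => // s a; exact: (close_n (s, a)).
Unshelve. all: by end_near.
Qed.

Lemma is_policy_lim (f : nat -> policy) p : (forall n, is_policy (f n)) ->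
  (forall s a, f n s a @[n --> \oo] --> p s a) -> is_policy p.
Proof.
move=> f_policy f_cvg; split=> [s a|s].
  by apply: (cvgr_to_ge (f_cvg s a)); apply: nearW => n; exact: (f_policy n).1.
have sum_cvg : \sum_a f n s a @[n --> \oo] --> \sum_a p s a.
  by apply: cvg_big => //; exact: add_continuous.
have sum_cvg1 : \sum_a f n s a @[n --> \oo] --> (1 : R).
  by under eq_cvg do rewrite (f_policy _).2; exact: cvg_cst.
exact: (cvg_unique _ sum_cvg sum_cvg1).
Qed.

Definition diag_joint (N : nat) p : joint N := (fun=> p, p).

Lemma jdist_ge0 N (x y : @joint R S A N) : 0 <= jdist x y.
Proof. by rewrite le_max supdist_ge0 orbT. Qed.

Lemma ler_jdist1 N (x y : @joint R S A N) i s a : `|x.1 i s a - y.1 i s a| <= jdist x y.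
Proof.
apply: le_trans (ler_supdist _ _ s a) _.
by rewrite le_max; apply/orP; left; exact: le_bigmax.
Qed.

Lemma feas_le N eps eps' (x : @joint R S A N) : eps <= eps' -> feas eps x -> feas eps' x.
Proof.
move=> le_eps [x1_policy [x2_policy x_close]].
by split=> //; split=> // i; exact: le_trans le_eps.
Qed.

Lemma jdist_diag_le N eps p (x : @joint R S A N) : 0 <= eps -> feas eps x ->
  jdist (diag_joint N p) x <= supdist p x.2 + eps.
Proof.
move=> eps_ge0 [_ [_ x_close]]; have sum_ge0 := addr_ge0 (supdist_ge0 p x.2) eps_ge0.
rewrite /jdist ge_max lerDl eps_ge0 andbT; apply/bigmax_leP; split=> // i _.
apply: supdist_le => // s a /=.
have -> : p s a - x.1 i s a = (p s a - x.2 s a) + (x.2 s a - x.1 i s a) by ring.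
apply: le_trans (ler_normD _ _) _; apply: lerD; first exact: ler_supdist.
by rewrite distrC; apply: le_trans (x_close i); exact: ler_supdist.
Qed.

End policy_distance.

Lemma cal_obj_lipschitz (R : realType) (S A : finType) (N nc : nat) (gamma : R)
  (rho : S -> R) (P : 'I_N -> S -> A -> S -> R) (piE : 'I_N -> @policy R S A)
  (Phi : S -> A -> 'I_nc -> R) (x y : joint N) :
  0 <= gamma < 1 -> is_distr rho -> (forall i, is_kernel (P i)) ->
  (forall s a k, `|Phi s a k| <= 1) ->
  (forall i, is_policy (x.1 i)) -> (forall i, is_policy (y.1 i)) ->
  cal_obj gamma rho P piE Phi x <= cal_obj gamma rho P piE Phi y
    + (N * nc * #|S| * #|A|)%:R * ((#|A|%:R + 1) * (1 - gamma) ^-2) * jdist x y.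
Proof.
move=> gamma_bd rho_distr P_kernel Phi_le1 x_policy y_policy.
set C := (#|A|%:R + 1) * (1 - gamma) ^-2.
have -> : (N * nc * #|S| * #|A|)%:R * C * jdist x y
          = \sum_(i < N) (nc * #|S| * #|A|)%:R * (C * jdist x y).
  by rewrite sumr_const card_ord -[RHS]mulr_natl -!mulnA !natrM !mulrA.
rewrite /cal_obj -big_split /=; apply: ler_sum => i _.
apply: feat_l1_lipschitz => // s a.
exact: (occ_dist_le gamma_bd rho_distr (P_kernel i) (x_policy i) (y_policy i) (ler_jdist1 x y i)).
Qed.

Lemma leq_increasing_seq (f : nat -> nat) : increasing_seq f -> forall n, (n <= f n)%N.
Proof.
move=> f_incr; elim=> [|n IH] //; apply: leq_ltn_trans IH _.
by have /increasing_seqP := f_incr; apply.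
Qed.

Lemma cvg_increasing_subseq (T : ptopologicalType) (u : nat -> T) (f : nat -> nat) (l : T) :
  increasing_seq f -> u @ \oo --> l -> (u \o f) @ \oo --> l.
Proof.
move=> f_incr u_cvg; apply: cvg_comp u_cvg; apply/cvgnyPge => M; near=> n.
by apply: leq_trans (leq_increasing_seq f_incr n); near: n; exact: nbhs_infty_ge.
Unshelve. all: by end_near.
Qed.

Lemma finite_bolzano_weierstrass (R : realType) (I : finType) (u : nat -> I -> R) (M : R) :
  (forall n i, `|u n i| <= M) ->
  exists2 f : nat -> nat, increasing_seq f & forall i, cvgn (fun n => u (f n) i).
Proof.
move=> u_bd.
suff /(_ (enum I))[f f_incr f_cvg] : forall l : seq I,
    exists2 f : nat -> nat, increasing_seq f & forall i, i \in l -> cvgn (fun n => u (f n) i).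
  by exists f => // i; apply: f_cvg; rewrite mem_enum.
elim=> [|i l [f f_incr f_cvg]]; first by exists id.
have i_bd : bounded_fun (fun n => u (f n) i).
  exists M; split; first exact: num_real.
  by move=> M' M_lt n _; apply: le_trans (u_bd _ _) (ltW M_lt).
have [g g_incr g_cvg] := bolzano_weierstrass i_bd.
exists (f \o g); first by move=> m n /=; rewrite f_incr -leEnat g_incr.
move=> j; rewrite inE => /orP[/eqP -> //|j_l].
apply/cvg_ex; exists (limn (fun n => u (f n) j)).
exact: (cvg_increasing_subseq g_incr (f_cvg j j_l)).
Qed.

Section minimiser_limit.
Context {R : realType} {S A : finType} {N nc : nat}.
Variables (gamma : R) (rho : S -> R) (P : 'I_N -> S -> A -> S -> R)
  (piE : 'I_N -> @policy R S A) (Phi : S -> A -> 'I_nc -> R).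
Hypotheses (gamma_bd : 0 <= gamma < 1) (rho_distr : is_distr rho)
  (P_kernel : forall i, is_kernel (P i)) (Phi_le1 : forall s a k, `|Phi s a k| <= 1).
Variables (xs : nat -> @joint R S A N) (es : nat -> R) (p : @policy R S A).
Hypotheses (xs_min : forall n, S_CAL gamma rho P piE Phi (es n) (xs n))
  (es_ge0 : forall n, 0 <= es n) (es_cvg0 : es @ \oo --> 0)
  (xs_cvg : forall s a, (xs n).2 s a @[n --> \oo] --> p s a).

Lemma jdist_diag_cvg0 : jdist (diag_joint N p) (xs n) @[n --> \oo] --> 0.
Proof.
apply: (@squeeze_cvgr _ _ _ _ (fun=> 0) (fun n => supdist p (xs n).2 + es n)).
- by apply: nearW => n; rewrite jdist_ge0 jdist_diag_le //; exact: (xs_min n).1.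
- exact: cvg_cst.
- by rewrite -[0]addr0; apply: cvgD => //; exact: supdist_cvg0.
Qed.

Lemma diag_limit_in_S_CAL0 : S_CAL gamma rho P piE Phi 0 (diag_joint N p).
Proof.
have p_policy : is_policy p by apply: is_policy_lim xs_cvg => n; exact: (xs_min n).1.2.1.
split; first by do 2?split=> //; move=> i; apply: supdist_le => // s a; rewrite subrr normr0.
move=> y y_feas; pose L := (N * nc * #|S| * #|A|)%:R * ((#|A|%:R + 1) * (1 - gamma) ^-2).
have obj_le n : cal_obj gamma rho P piE Phi (diag_joint N p)
    <= cal_obj gamma rho P piE Phi y + L * jdist (diag_joint N p) (xs n).
  apply: le_trans (cal_obj_lipschitz piE gamma_bd rho_distr P_kernel Phi_le1 _ _) _ => //.
    exact: (xs_min n).1.1.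
  rewrite lerD2r; apply: (xs_min n).2; exact: feas_le (es_ge0 n) y_feas.
have obj_cvg : cal_obj gamma rho P piE Phi y + L * jdist (diag_joint N p) (xs n)
    @[n --> \oo] --> cal_obj gamma rho P piE Phi y.
  rewrite -[X in _ --> X]addr0 -(mulr0 L); apply: cvgD; first exact: cvg_cst.
  by apply: cvgM; [exact: cvg_cst | exact: jdist_diag_cvg0].
by apply: (cvgr_to_ge obj_cvg); exact: nearW.
Qed.

End minimiser_limit.

Theorem lemma4 (R : realType) (S A : finType) (N nc : nat) (gamma : R)
  (rho : S -> R) (P : 'I_N -> S -> A -> S -> R) (piE : 'I_N -> @policy R S A)
  (Phi : S -> A -> 'I_nc -> R) :
  0 < gamma < 1 -> is_distr rho -> (forall i, is_kernel (P i)) ->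
  (forall i, is_policy (piE i)) -> (forall s a k, `|Phi s a k| <= 1) ->
  (* upper semicontinuity of eps |-> S^CAL(eps) on [0,1] at eps = 0 *)
  forall V : set (joint N),
    jopen V -> S_CAL gamma rho P piE Phi 0 `<=` V ->
    exists2 delta : R, 0 < delta &
      forall eps : R, 0 <= eps <= 1 -> eps < delta ->
        S_CAL gamma rho P piE Phi eps `<=` V.
Proof.
(* The expert terms are constants of the objective: [piE] need not consist of policies. *)
move=> /andP[gamma_gt0 gamma_lt1] rho_distr P_kernel _ Phi_le1 V V_open S0_sub.
have gamma_bd : 0 <= gamma < 1 by rewrite ltW.
apply: contrapT => no_delta.
have outside_V n : exists ex : R * joint N, [/\ 0 <= ex.1, ex.1 < harmonic n,
    S_CAL gamma rho P piE Phi ex.1 ex.2 & ~ V ex.2].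
  apply: contrapT => no_outside; apply: no_delta.
  exists (harmonic n) => [|eps /andP[eps_ge0 _] eps_lt x Sx]; first exact: harmonic_gt0.
  by apply: contrapT => notVx; apply: no_outside; exists (eps, x).
have [ex exP] := choice outside_V.
have consensus_le1 n (sa : S * A) : `|(ex n).2.2 sa.1 sa.2| <= 1.
  have [_ _ [[_ [ex_policy _]] _] _] := exP n.
  by rewrite ger0_norm ?ex_policy.1 //; exact: policy_le1.
have [phi phi_incr phi_cvg] := finite_bolzano_weierstrass consensus_le1.
have eps_cvg0 : (ex n).1 @[n --> \oo] --> 0.
  apply: (@squeeze_cvgr _ _ _ _ (fun=> 0) harmonic); [|exact: cvg_cst|exact: cvg_harmonic].
  by apply: nearW => n; have [eps_ge0 eps_lt _ _] := exP n; rewrite eps_ge0 ltW.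
pose xs n := (ex (phi n)).2; pose es n := (ex (phi n)).1.
pose p s a := limn (fun n => (xs n).2 s a).
have xs_min n : S_CAL gamma rho P piE Phi (es n) (xs n) by case: (exP (phi n)).
have es_ge0 n : 0 <= es n by case: (exP (phi n)).
have es_phi_cvg0 : es @ \oo --> 0 := cvg_increasing_subseq phi_incr eps_cvg0.
have xs_cvg s a : (xs n).2 s a @[n --> \oo] --> p s a := phi_cvg (s, a).
have S0_diag :=
  diag_limit_in_S_CAL0 gamma_bd rho_distr P_kernel Phi_le1 xs_min es_ge0 es_phi_cvg0 xs_cvg.
have [r r_gt0 ballV] := V_open _ (S0_sub _ S0_diag).
have [n _ /(_ n (leqnn n)) close] :=
  cvgr_lt _ (jdist_diag_cvg0 xs_min es_ge0 es_phi_cvg0 xs_cvg) _ r_gt0.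
by have [_ _ _ notV] := exP (phi n); apply/notV/ballV.
Qed.
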